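(* Let $P,Q$ be probability measures, $X\sim P$, and suppose $\mathbb{P}[\imath_{P\|Q}(X)=x]=0$ for every $x\in\mathbb{R}$. Then: (a) $\gamma\mapsto E_\gamma(P\|Q)$ is continuously differentiable on $(1,\infty)$ with derivative $E'_\gamma(P\|Q)\le 0$; (b) for all $\gamma>1$, $$\mathbb{F}_{P\|Q}(\log\gamma) = 1-E_\gamma(P\|Q)+\gamma E'_\gamma(P\|Q),\qquad \mathbb{F}_{P\|Q}(-\log\gamma) = -E'_\gamma(Q\|P),$$ and $\mathbb{F}_{P\|Q}(0) = 1-E_1(P\|Q)+\lim_{\gamma\downarrow1}E'_\gamma(P\|Q) = -\lim_{\gamma\downarrow1}E'_\gamma(Q\|P)$; (c) consequently, the family $\{E_\gamma(P\|Q):\gamma\ge1\}$ determines $\mathbb{F}_{P\|Q}$ on $[0,\infty)$, and the family $\{E_\gamma(Q\|P):\gamma>1\}$ determines $\mathbb{F}_{P\|Q}$ on $(-\infty,0)$.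
   Context: $\log$ is to a fixed base $b>1$. For densities $p,q$ of $P,Q$ w.r.t. a dominating measure $\mu$, $\imath_{P\|Q}:=\log p-\log q$ (in $[-\infty,\infty]$), $\mathbb{F}_{P\|Q}(x):=\mathbb{P}[\imath_{P\|Q}(X)\le x]$ with $X\sim P$. For $\gamma\ge1$, $E_\gamma(P\|Q):=\sup_U\bigl(P(U)-\gamma Q(U)\bigr)=\int(p-\gamma q)^+\,\mathrm{d}\mu$. *)

From HB Require Import structures.
From mathcomp Require Import all_boot all_order all_algebra.
From mathcomp Require Import all_classical all_reals all_analysis.
Set Implicit Arguments. Unset Strict Implicit. Unset Printing Implicit Defensive.
Import Order.TTheory GRing.Theory Num.Theory.
Import numFieldNormedType.Exports.
Local Open Scope classical_set_scope.
Local Open Scope ring_scope.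

Definition logb {R : realType} (b x : R) : R := ln x / ln b.

Definition is_density {R : realType} {d} {T : measurableType d}
  (mu : {measure set T -> \bar R}) (P : set T -> \bar R) (p : T -> R) : Prop :=
  measurable_fun setT p /\ (forall t, 0 <= p t) /\
  (forall A, measurable A -> P A = (\int[mu]_(t in A) (p t)%:E)%E).

(* information density  i_{P||Q} = log p - log q  in [-oo, +oo]
   (the value where p = q = 0 is irrelevant: that set is P- and Q-null) *)
Definition infodens {R : realType} {T : Type} (b : R) (p q : T -> R) (t : T)
  : \bar R :=
  if p t == 0 then (if q t == 0 then 0%E else -oo%E)
  else if q t == 0 then +oo%E
  else (logb b (p t) - logb b (q t))%:E.

Definition relcdf {R : realType} {d} {T : measurableType d}
  (P : set T -> \bar R) (b : R) (p q : T -> R) (x : R) : R :=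
  fine (P [set t | (infodens b p q t <= x%:E)%E]).

Definition Egamma {R : realType} {d} {T : measurableType d}
  (P Q : set T -> \bar R) (g : R) : R :=
  fine (ereal_sup [set (P U - g%:E * Q U)%E | U in measurable]).

Definition no_atoms {R : realType} {d} {T : measurableType d}
  (P : set T -> \bar R) (b : R) (p q : T -> R) : Prop :=
  forall x : R, P [set t | infodens b p q t = x%:E] = 0%E.

From mathcomp Require Import all_boot all_order all_algebra.
From mathcomp Require Import all_classical all_reals all_analysis.
From mathcomp Require Import measurable_realfun lra.
Set Implicit Arguments. Unset Strict Implicit. Unset Printing Implicit Defensive.
Import Order.TTheory GRing.Theory Num.Theory.
Import numFieldNormedType.Exports.
Local Open Scope classical_set_scope.
Local Open Scope ring_scope.

(* By a Neyman-Pearson argument the supremum defining E_g(P||Q) is attained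
   at A_g = {p > g q}, so E_g = P(A_g) - g Q(A_g), and the line through
   (g, E_g) with slope -Q(A_g) supports g |-> E_g.  Hence E is differentiable
   wherever g |-> Q(A_g) is continuous, with derivative -Q(A_g).  That function
   is nonincreasing and right-continuous, and its jump at g is Q(p = g q); for
   g > 1 this vanishes because {p = g q, p > 0} is the atom {i = log g}, which
   is P-null, and P >= g Q there.  Finally F(log g) = 1 - P(A_g) and
   F(-log g) = P(q > g p), which gives (b); (c) follows since b^x sweeps
   (1, +oo) as x sweeps (0, +oo), while F(0) is recovered from the limit of
   E' at 1 from the right. *)

Section logb.
Variables (R : realType) (b : R).
Hypothesis b_gt1 : 1 < b.

Let lnb_gt0 : 0 < ln b. Proof. exact: ln_gt0. Qed.

Lemma logb1 : logb b 1 = 0.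
Proof. by rewrite /logb ln1 mul0r. Qed.

Lemma logbM (x y : R) : 0 < x -> 0 < y -> logb b (x * y) = logb b x + logb b y.
Proof. by move=> x0 y0; rewrite /logb lnM ?posrE // mulrDl. Qed.

Lemma logbV (x : R) : 0 < x -> logb b x^-1 = - logb b x.
Proof. by move=> x0; rewrite /logb lnV ?posrE // mulNr. Qed.

Lemma ler_logb (x y : R) : 0 < x -> 0 < y -> (logb b x <= logb b y) = (x <= y).
Proof. by move=> x0 y0; rewrite ler_pM2r ?invr_gt0 // ler_ln ?posrE. Qed.

Lemma ltr_logb (x y : R) : 0 < x -> 0 < y -> (logb b x < logb b y) = (x < y).
Proof. by move=> x0 y0; rewrite ltr_pM2r ?invr_gt0 // ltr_ln ?posrE. Qed.

Lemma logb_ge0 (x : R) : 1 <= x -> 0 <= logb b x.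
Proof. by move=> x1; rewrite -logb1 ler_logb // (lt_le_trans ltr01). Qed.

Lemma logb_expR (x : R) : logb b (expR (x * ln b)) = x.
Proof. by rewrite /logb expRK mulfK // gt_eqF. Qed.

End logb.

Section infodens.
Variables (R : realType) (T : Type) (b : R) (p q : T -> R).
Hypothesis b_gt1 : 1 < b.

Lemma infodensE t : 0 < p t -> 0 < q t ->
  infodens b p q t = (logb b (p t / q t))%:E.
Proof.
move=> p0 q0; rewrite /infodens (gt_eqF p0) (gt_eqF q0).
by rewrite logbM ?invr_gt0 // logbV.
Qed.

Lemma infodens_le_logb t g : 0 <= p t -> 0 <= q t -> 1 <= g ->
  (infodens b p q t <= (logb b g)%:E)%E = (p t <= g * q t).
Proof.
move=> p0 q0 g1; have g0 : 0 < g := lt_le_trans ltr01 g1.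
have [pe|pn] := eqVneq (p t) 0; have [qe|qn] := eqVneq (q t) 0.
- by rewrite /infodens pe qe eqxx mulr0 lexx lee_fin logb_ge0.
- by rewrite /infodens pe eqxx (negbTE qn) leNye mulr_ge0 ?(ltW g0).
- rewrite /infodens qe eqxx (negbTE pn) leye_eq mulr0 /=.
  by apply/esym/negbTE; rewrite -ltNge lt_neqAle eq_sym pn.
- have pp : 0 < p t by rewrite lt_neqAle eq_sym pn.
  have qp : 0 < q t by rewrite lt_neqAle eq_sym qn.
  by rewrite infodensE // lee_fin ler_logb ?divr_gt0 // ler_pdivrMr.
Qed.

Lemma infodens_lt_Nlogb t g : 0 <= p t -> 0 <= q t -> 1 <= g ->
  (infodens b p q t < (- logb b g)%:E)%E = (g * p t < q t).
Proof.
move=> p0 q0 g1; have g0 : 0 < g := lt_le_trans ltr01 g1.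
have [pe|pn] := eqVneq (p t) 0; have [qe|qn] := eqVneq (q t) 0.
- by rewrite /infodens pe qe eqxx mulr0 ltxx lte_fin oppr_gt0 ltNge logb_ge0.
- by rewrite /infodens pe eqxx (negbTE qn) ltNye mulr0 /= lt_neqAle eq_sym qn.
- by rewrite /infodens qe eqxx (negbTE pn) ltNge leey ltNge mulr_ge0 ?(ltW g0).
- have pp : 0 < p t by rewrite lt_neqAle eq_sym pn.
  have qp : 0 < q t by rewrite lt_neqAle eq_sym qn.
  rewrite infodensE // lte_fin -logbV // ltr_logb ?divr_gt0 ?invr_gt0 //.
  by rewrite ltr_pdivrMr // ltr_pdivlMl.
Qed.

Lemma infodens_eq_logb t g : 0 < g -> 0 < p t -> p t = g * q t ->
  infodens b p q t = (logb b g)%:E.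
Proof.
move=> g0 p0 pgq; have q0 : 0 < q t by rewrite -(pmulr_rgt0 _ g0) -pgq.
by rewrite infodensE // pgq mulfK // gt_eqF.
Qed.

Lemma infodens_eq_Nlogb t g : 0 < g -> 0 < p t -> q t = g * p t ->
  infodens b p q t = (- logb b g)%:E.
Proof.
move=> g0 p0 qgp; have q0 : 0 < q t by rewrite qgp mulr_gt0.
by rewrite infodensE // qgp invfM mulrCA divff ?gt_eqF // mulr1 logbV.
Qed.

End infodens.

Section measurability.
Variables (R : realType) (d : measure_display) (T : measurableType d).

Lemma measurable_bool_set (f : T -> bool) :
  measurable_fun setT f -> measurable [set t | f t].
Proof.
move=> mf; have := mf measurableT [set true] I; rewrite setTI.
by congr measurable; apply/seteqP; split => t.
Qed.

Lemma measurable_infodens (b : R) (p q : T -> R) :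
  measurable_fun setT p -> measurable_fun setT q ->
  measurable_fun setT (infodens b p q).
Proof.
move=> mp mq.
have mp0 := measurable_fun_eqr mp (measurable_cst (0 : R)).
have mq0 := measurable_fun_eqr mq (measurable_cst (0 : R)).
have mlogb (f : T -> R) : measurable_fun setT f -> measurable_fun setT (logb b \o f).
  by move=> mf; exact: measurable_funM (measurableT_comp (@measurable_ln R) mf) (measurable_cst _).
apply: measurable_fun_ifT => //; apply: measurable_fun_ifT => //.
by apply/measurable_EFinP; apply: measurable_funB; exact: mlogb.
Qed.

Lemma measurable_infodens_eq (b : R) (p q : T -> R) (x : \bar R) :
  measurable_fun setT p -> measurable_fun setT q ->
  measurable [set t | infodens b p q t = x].
Proof.
move=> mp mq; have := measurable_infodens b mp mq measurableT (emeasurable_set1 x).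
by rewrite setTI.
Qed.

End measurability.

Section densities.
Variables (R : realType) (d : measure_display) (T : measurableType d).
Variable mu : {measure set T -> \bar R}.

Lemma probability_fineE (P : probability T R) A :
  measurable A -> P A = (fine (P A))%:E.
Proof. by move=> mA; rewrite fineK // fin_num_measure. Qed.

Lemma fine_probability_le (P : probability T R) A B :
  measurable A -> measurable B -> A `<=` B -> fine (P A) <= fine (P B).
Proof.
move=> mA mB AB; rewrite -lee_fin -!probability_fineE //.
by apply: le_measure => //; rewrite inE.
Qed.

Lemma fine_probabilityDI (P : probability T R) A B :
  measurable A -> measurable B -> fine (P A) = fine (P (A `\` B)) + fine (P (A `&` B)).
Proof.
move=> mA mB; have mAB := measurableD mA mB; have mAIB := measurableI _ _ mA mB.
by apply: EFin_inj; rewrite EFinD -!probability_fineE // (measureDI _ mA mB).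
Qed.

Lemma density_le (P1 P2 : probability T R) (p1 p2 : T -> R) (k1 k2 : R) V :
  is_density mu P1 p1 -> is_density mu P2 p2 -> 0 <= k1 -> 0 <= k2 ->
  measurable V -> (forall t, V t -> k1 * p1 t <= k2 * p2 t) ->
  k1 * fine (P1 V) <= k2 * fine (P2 V).
Proof.
move=> [mp1 [p1_ge0 P1E]] [mp2 [p2_ge0 P2E]] k1_ge0 k2_ge0 mV le_k.
have mpV (p : T -> R) : measurable_fun setT p -> measurable_fun V (EFin \o p).
  by move=> mp; apply/measurable_EFinP; exact: measurable_funS mp.
rewrite -lee_fin !EFinM -!probability_fineE // P1E // P2E //.
rewrite -!ge0_integralZl_EFin //; try by move=> t _; rewrite lee_fin.
apply: ge0_le_integral => //; first by move=> t _; rewrite mule_ge0 // lee_fin.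
all: by [apply: measurable_funeM; exact: mpV | exact: mpV].
Qed.

Lemma density_null (P : probability T R) (p : T -> R) V :
  is_density mu P p -> measurable V -> (forall t, V t -> p t = 0) -> P V = 0%E.
Proof.
move=> [_ [_ PE]] mV p0; rewrite PE //.
by apply: integral0_eq => t Vt; rewrite p0.
Qed.

End densities.

Section real_analysis.
Variable R : realType.

Lemma ler_natSinvMr (x y z : R) :
  (forall n : nat, x <= y + n.+1%:R^-1 * z) -> x <= y.
Proof.
move=> le_xyz; rewrite leNgt; apply/negP => lt_yx.
have [z_le0|z_gt0] := lerP z 0.
  by have := le_xyz 0%N; rewrite invr1 mul1r; lra.
have [n] : exists n : nat, 0 + n.+1%:R^-1 < (x - y) / z.
  by apply: ltr_add_invr; rewrite divr_gt0 // subr_gt0.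
rewrite add0r ltr_pdivlMr //; have := le_xyz n; set k := n.+1%:R^-1; lra.
Qed.

Lemma ler_natSinv (n m : nat) : (n <= m)%N -> m.+1%:R^-1 <= n.+1%:R^-1 :> R.
Proof. by move=> nm; rewrite lef_pV2 ?posrE // ler_nat ltnS. Qed.

Lemma nonincreasing_continuous_at (F : R -> R) (g : R) :
  {homo F : x y /~ x <= y} ->
  (forall e, 0 < e -> exists2 r, 0 < r & F (g - r) - F g < e) ->
  (forall e, 0 < e -> exists2 r, 0 < r & F g - F (g + r) < e) ->
  {for g, continuous F}.
Proof.
move=> F_dec F_left F_right; apply/cvgrPdist_lt => e e_gt0.
have [r1 r1_gt0 lt_r1] := F_left e e_gt0.
have [r2 r2_gt0 lt_r2] := F_right e e_gt0.
near=> x.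
have x_gt : g - r1 < x by near: x; apply: lt_nbhsr; rewrite gtrBl.
have x_lt : x < g + r2 by near: x; apply: lt_nbhsl; rewrite ltrDl.
have := F_dec _ _ (ltW x_gt); have := F_dec _ _ (ltW x_lt).
rewrite ltr_norml; have [xg|gx] := leP x g.
- by have := F_dec _ _ xg; lra.
- by have := F_dec _ _ (ltW gx); lra.
Unshelve. all: by end_near.
Qed.

Lemma nonincreasing_cvg_at_right (F : R -> R) (g : R) :
  {homo F : x y /~ x <= y} ->
  (forall e, 0 < e -> exists2 r, 0 < r & F g - F (g + r) < e) ->
  F x @[x --> g^'+] --> F g.
Proof.
move=> F_dec F_right; apply/cvgrPdist_lt => e e_gt0.
have [r r_gt0 lt_r] := F_right e e_gt0.
near=> x.
have gx : g < x by near: x; exact: nbhs_right_gt.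
have x_lt : x < g + r by near: x; apply: nbhs_right_lt; rewrite ltrDl.
have Fxg := F_dec _ _ (ltW gx); have := F_dec _ _ (ltW x_lt).
by rewrite ger0_norm ?subr_ge0 //; lra.
Unshelve. all: by end_near.
Qed.

Lemma dist_quotient_le (h D a c : R) : h != 0 -> h * a <= D -> D <= h * c ->
  `|a - h^-1 * D| <= `|a - c|.
Proof.
move=> h_neq0; rewrite -{1 2}(mulVKf h_neq0 D); set y := h^-1 * D.
have [h_lt0|h_ge0] := ltP h 0.
  rewrite !ler_nM2l // => ya cy; rewrite ger0_norm ?subr_ge0 //.
  by apply: le_trans (ler_norm _); lra.
have h_gt0 : 0 < h by rewrite lt_neqAle eq_sym h_neq0.
rewrite !ler_pM2l // => ay yc; rewrite ler0_norm ?subr_le0 // distrC.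
by apply: le_trans (ler_norm _); lra.
Qed.

Lemma derivable_supporting_lines (E s : R -> R) (g : R) :
  (\forall x \near g, E g + (x - g) * s g <= E x /\ E x + (g - x) * s x <= E g) ->
  {for g, continuous s} -> derivable E g 1 /\ derive1 E g = s g.
Proof.
move=> /nbhs0P lines /cvgrPdist_lt s_cont.
have quotient_cvg : h^-1 * (E (h + g) - E g) @[h --> 0^'] --> s g.
  apply/cvgrPdist_lt => e e_gt0; have /nbhs0P near_s := s_cont e e_gt0.
  near=> h.
  have h_neq0 : h != 0 by near: h; exact: nbhs_dnbhs_neq.
  have [below above] : E g + h * s g <= E (h + g) /\
      E (h + g) - h * s (h + g) <= E g.
    near: h; apply: nbhs_dnbhs; apply: filterS lines => h.
    by rewrite (addrC g) addrK opprD addrCA subrr addr0 mulNr.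
  apply: le_lt_trans (@dist_quotient_le h _ _ (s (h + g)) h_neq0 _ _) _; [lra|lra|].
  by near: h; apply: nbhs_dnbhs; apply: filterS near_s => x; rewrite (addrC g).
split; last exact: cvg_lim.
apply/cvg_ex; exists (s g); apply: cvg_trans quotient_cvg; apply: near_eq_cvg.
by near=> h; rewrite [h%:A]mulr1.
Unshelve. all: by end_near.
Qed.

Lemma eq_derive1_in (E E' : R -> R) (a g : R) : a < g ->
  (forall x, a < x -> E x = E' x) -> derive1 E g = derive1 E' g.
Proof.
move=> ag EE'; rewrite !derive1E; apply: near_eq_derive.
by near=> x; apply: EE'; near: x; exact: lt_nbhsr.
Unshelve. all: by end_near.
Qed.

End real_analysis.

(* lr stands for the likelihood ratio p/q: [lr_gt p q g] is {p/q > g}. *)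
Definition lr_gt {R : realType} {T : Type} (p q : T -> R) (g : R) : set T :=
  [set t | g * q t < p t].

Definition lr_tail {R : realType} {d} {T : measurableType d}
    (Q : set T -> \bar R) (p q : T -> R) (g : R) : R :=
  fine (Q (lr_gt p q g)).

Lemma nonincreasing_mu_lt (R : realType) (d : measure_display)
    (T : measurableType d) (P : probability T R) (B : nat -> set T) :
  (forall n, measurable (B n)) -> {homo B : n m / (n <= m)%N >-> m `<=` n} ->
  P (\bigcap_n B n) = 0%E -> forall e, 0 < e -> exists n, fine (P (B n)) < e.
Proof.
move=> mB B_dec P_cap e e_gt0.
have : (P \o B) n @[n --> \oo] --> 0%E.
  rewrite -P_cap; apply: nonincreasing_cvg_mu => //.
  - by apply: le_lt_trans (probability_le1 P (mB 0%N)) _; exact: ltry.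
  - exact: bigcapT_measurable.
  - by move=> n m nm; apply/asboolP; exact: B_dec.
move=> /fine_cvgP [_ /cvgrPdist_lt /(_ e e_gt0) [N _ lt_N]].
exists N; have := lt_N N (leqnn N).
by rewrite /= sub0r normrN; apply: le_lt_trans; exact: ler_norm.
Qed.

Section neyman_pearson.
Variables (R : realType) (d : measure_display) (T : measurableType d).
Variables (mu : {measure set T -> \bar R}) (P Q : probability T R) (p q : T -> R).
Hypotheses (hp : is_density mu P p) (hq : is_density mu Q q).

Lemma measurable_lr_gt g : measurable (lr_gt p q g).
Proof.
apply: measurable_bool_set; apply: measurable_fun_ltr hp.1.
by apply: measurable_funM hq.1; exact: measurable_cst.
Qed.

Lemma measurable_lr_eq g : measurable [set t | p t == g * q t].
Proof.
apply: measurable_bool_set.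
exact: measurable_fun_eqr hp.1 (measurable_funM (measurable_cst g) hq.1).
Qed.

Lemma neyman_pearson g U : 0 <= g -> measurable U ->
  fine (P U) - g * fine (Q U) <=
  fine (P (lr_gt p q g)) - g * fine (Q (lr_gt p q g)).
Proof.
move=> g_ge0 mU; set A := lr_gt p q g; have mA : measurable A := measurable_lr_gt g.
rewrite (fine_probabilityDI P mU mA) (fine_probabilityDI Q mU mA).
rewrite (fine_probabilityDI P mA mU) (fine_probabilityDI Q mA mU) (setIC A U).
have out_A : 1 * fine (P (U `\` A)) <= g * fine (Q (U `\` A)).
  apply: (density_le hp hq ler01 g_ge0 (measurableD mU mA)) => t [_ /negP].
  by rewrite mul1r -leNgt.
have in_A : g * fine (Q (A `\` U)) <= 1 * fine (P (A `\` U)).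
  apply: (density_le hq hp g_ge0 ler01 (measurableD mA mU)) => t [/ltW].
  by rewrite mul1r.
lra.
Qed.

Lemma EgammaE g : 0 <= g ->
  Egamma P Q g = fine (P (lr_gt p q g)) - g * lr_tail Q p q g.
Proof.
move=> g_ge0; have mA := measurable_lr_gt g.
rewrite /Egamma; set S := [set _ | _ in _].
suff -> : ereal_sup S = (fine (P (lr_gt p q g)) - g * lr_tail Q p q g)%:E by [].
apply/le_anti/andP; split.
- apply: ge_ereal_sup => _ [U mU <-].
  rewrite (probability_fineE P mU) (probability_fineE Q mU) -EFinM -EFinB lee_fin.
  exact: neyman_pearson.
- apply: ereal_sup_ubound; exists (lr_gt p q g) => //.
  by rewrite (probability_fineE P mA) (probability_fineE Q mA) -EFinM -EFinB.
Qed.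

Lemma Egamma_supporting_line g g' : 0 <= g -> 0 <= g' ->
  Egamma P Q g - (g' - g) * lr_tail Q p q g <= Egamma P Q g'.
Proof.
move=> g_ge0 g'_ge0; rewrite !EgammaE // /lr_tail.
by have := neyman_pearson g'_ge0 (measurable_lr_gt g); lra.
Qed.

Lemma lr_tail_nonincreasing : {homo lr_tail Q p q : x y /~ x <= y}.
Proof.
move=> x y xy; apply: fine_probability_le; try exact: measurable_lr_gt.
by move=> t; rewrite /lr_gt /=; apply: le_lt_trans; rewrite ler_wpM2r // hq.2.1.
Qed.

Lemma lr_tailB x y : x <= y ->
  lr_tail Q p q x - lr_tail Q p q y = fine (Q (lr_gt p q x `\` lr_gt p q y)).
Proof.
move=> xy; rewrite /lr_tail (fine_probabilityDI Q (measurable_lr_gt x) (measurable_lr_gt y)).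
rewrite setIidr ?addrK //.
by move=> t; rewrite /lr_gt /=; apply: le_lt_trans; rewrite ler_wpM2r // hq.2.1.
Qed.

Lemma lr_tail_right_small g e : 0 < e ->
  exists2 r, 0 < r & lr_tail Q p q g - lr_tail Q p q (g + r) < e.
Proof.
move=> e_gt0; pose B n := lr_gt p q g `\` lr_gt p q (g + n.+1%:R^-1).
have mB n : measurable (B n) by apply: measurableD; exact: measurable_lr_gt.
have B_dec : {homo B : n m / (n <= m)%N >-> m `<=` n}.
  move=> n m nm t [gt_g /negP]; rewrite -leNgt => le_m; split => //; apply/negP.
  rewrite -leNgt; apply: (le_trans le_m); rewrite ler_wpM2r ?hq.2.1 //.
  by rewrite lerD2l ler_natSinv.
have B_cap : \bigcap_n B n = set0.
  apply/seteqP; split => // t B_t; have [gt_g _] := B_t 0%N I.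
  suff : p t <= g * q t by rewrite leNgt gt_g.
  apply: (@ler_natSinvMr _ _ _ (q t)) => n; have [_ /negP] := B_t n I.
  by rewrite -leNgt mulrDl.
have Q_cap : Q (\bigcap_n B n) = 0%E by rewrite B_cap measure0.
have [n lt_n] := nonincreasing_mu_lt mB B_dec Q_cap e_gt0.
exists n.+1%:R^-1; first by rewrite invr_gt0.
by rewrite lr_tailB // lerDl invr_ge0.
Qed.

Lemma lr_tail_left_small g e : Q [set t | p t == g * q t] = 0%E -> 0 < e ->
  exists2 r, 0 < r & lr_tail Q p q (g - r) - lr_tail Q p q g < e.
Proof.
move=> Q_eq e_gt0; pose B n := lr_gt p q (g - n.+1%:R^-1) `\` lr_gt p q g.
have mB n : measurable (B n) by apply: measurableD; exact: measurable_lr_gt.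
have B_dec : {homo B : n m / (n <= m)%N >-> m `<=` n}.
  move=> n m nm t [gt_m le_g]; split => //; apply: le_lt_trans gt_m.
  by rewrite ler_wpM2r ?hq.2.1 // lerD2l lerN2 ler_natSinv.
have B_cap : \bigcap_n B n `<=` [set t | p t == g * q t].
  move=> t B_t /=; have [_ /negP] := B_t 0%N I; rewrite -leNgt => le_g.
  rewrite eq_le le_g /=; apply: (@ler_natSinvMr _ _ _ (q t)) => n.
  have [gt_n _] := B_t n I; move: gt_n; rewrite /lr_gt /= mulrBl.
  by set k := n.+1%:R^-1; lra.
have Q_cap : Q (\bigcap_n B n) = 0%E.
  apply/le_anti; rewrite measure_ge0 andbT -Q_eq.
  apply: le_measure B_cap; rewrite inE; first exact: bigcapT_measurable.
  exact: measurable_lr_eq.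
have [n lt_n] := nonincreasing_mu_lt mB B_dec Q_cap e_gt0.
exists n.+1%:R^-1; first by rewrite invr_gt0.
by rewrite lr_tailB // lerBlDr lerDl invr_ge0.
Qed.

Lemma lr_tail_continuous g : Q [set t | p t == g * q t] = 0%E ->
  {for g, continuous (lr_tail Q p q)}.
Proof.
move=> Q_eq; apply: nonincreasing_continuous_at lr_tail_nonincreasing _ _.
- by move=> e; exact: lr_tail_left_small.
- by move=> e; exact: lr_tail_right_small.
Qed.

Lemma Egamma_derivative g : 0 < g -> Q [set t | p t == g * q t] = 0%E ->
  derivable (Egamma P Q) g 1 /\ derive1 (Egamma P Q) g = - lr_tail Q p q g.
Proof.
move=> g_gt0 Q_eq.
apply: (@derivable_supporting_lines _ _ (fun x => - lr_tail Q p q x)).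
- near=> x; have x_gt0 : 0 < x by near: x; exact: lt_nbhsr.
  have := Egamma_supporting_line (ltW g_gt0) (ltW x_gt0).
  have := Egamma_supporting_line (ltW x_gt0) (ltW g_gt0).
  by rewrite !mulrN; lra.
- by apply: cvgN; exact: lr_tail_continuous.
Unshelve. all: by end_near.
Qed.

Lemma lr_tail_cvg_at_right g : lr_tail Q p q x @[x --> g^'+] --> lr_tail Q p q g.
Proof.
apply: nonincreasing_cvg_at_right lr_tail_nonincreasing _.
by move=> e; exact: lr_tail_right_small.
Qed.

End neyman_pearson.

Section information_spectrum.
Variables (R : realType) (b : R) (d : measure_display) (T : measurableType d).
Variables (mu : {measure set T -> \bar R}) (P Q : probability T R) (p q : T -> R).
Hypotheses (b_gt1 : 1 < b) (hp : is_density mu P p) (hq : is_density mu Q q).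
Hypothesis hatom : no_atoms P b p q.

Lemma relcdf_logb g : 1 <= g -> relcdf P b p q (logb b g) = 1 - fine (P (lr_gt p q g)).
Proof.
move=> g_ge1; have mA := measurable_lr_gt hp hq g; rewrite /relcdf.
have -> : [set t | (infodens b p q t <= (logb b g)%:E)%E] = ~` lr_gt p q g.
  by apply/seteqP; split => t /=; rewrite infodens_le_logb ?hp.2.1 ?hq.2.1 // leNgt => /negP.
by rewrite probability_setC // (probability_fineE P mA) -EFinB.
Qed.

Lemma relcdf_Nlogb g : 1 <= g -> relcdf P b p q (- logb b g) = lr_tail P q p g.
Proof.
move=> g_ge1; have mA := measurable_lr_gt hq hp g.
have mE := measurable_infodens_eq b (- logb b g)%:E hp.1 hq.1.
have ltE t : (infodens b p q t < (- logb b g)%:E)%E = (g * p t < q t).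
  by rewrite infodens_lt_Nlogb ?hp.2.1 ?hq.2.1.
rewrite /relcdf.
have -> : [set t | (infodens b p q t <= (- logb b g)%:E)%E] =
    lr_gt q p g `|` [set t | infodens b p q t = (- logb b g)%:E].
  apply/seteqP; split => t /=.
  - by rewrite le_eqVlt => /orP [/eqP ->|]; [right|rewrite ltE; left].
  - by case=> [|-> //]; rewrite /lr_gt /= -ltE => /ltW.
rewrite measureU //; first apply: (congr1 fine).
  by rewrite -[RHS]addr0; congr (_ + _); exact: hatom.
by apply/seteqP; split => // t [/=]; rewrite /lr_gt /= -ltE => /[swap] ->; rewrite ltxx.
Qed.

Let measurable_p0 : measurable [set t | p t == 0].
Proof. by apply: measurable_bool_set; exact: measurable_fun_eqr hp.1 (measurable_cst _). Qed.

Lemma atom_cover_null S x : measurable S ->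
  (forall t, S t -> 0 < p t -> infodens b p q t = x%:E) -> P S = 0%E.
Proof.
move=> mS S_atom; apply/negligibleP => //.
apply: (@negligibleS _ _ _ _ ([set t | infodens b p q t = x%:E] `|` [set t | p t == 0])).
- move=> t St; have [p0|p_neq0] := eqVneq (p t) 0; first by right; exact/eqP.
  by left; apply: S_atom; rewrite // lt_neqAle eq_sym p_neq0 hp.2.1.
- apply: negligibleU; apply/negligibleP.
  + exact: measurable_infodens_eq hp.1 hq.1.
  + exact: hatom.
  + exact: measurable_p0.
  + by apply: density_null hp measurable_p0 _ => t /eqP.
Qed.

Lemma Q_lr_eq_null g : 1 < g -> Q [set t | p t == g * q t] = 0%E.
Proof.
move=> g_gt1; have g_gt0 : 0 < g := lt_trans ltr01 g_gt1.
set S := [set t | p t == g * q t]; have mS : measurable S := measurable_lr_eq hp hq g.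
(* On S the atom {i = log g} covers {p > 0}, and P >= g Q. *)
have P_S : P S = 0%E.
  by apply: (atom_cover_null (x := logb b g) mS) => t /eqP pgq p_gt0; exact: infodens_eq_logb.
have : g * fine (Q S) <= 1 * fine (P S).
  by apply: (density_le hq hp (ltW g_gt0) ler01 mS) => t /eqP ->; rewrite mul1r.
rewrite P_S mulr0 pmulr_rle0 // => Q_le0.
rewrite (probability_fineE Q mS); congr EFin; apply/le_anti.
by rewrite Q_le0 fine_ge0.
Qed.

Lemma P_lr_eq_null g : 1 < g -> P [set t | q t == g * p t] = 0%E.
Proof.
move=> g_gt1; have g_gt0 : 0 < g := lt_trans ltr01 g_gt1.
apply: (atom_cover_null (x := - logb b g) (measurable_lr_eq hq hp g)) => t /eqP qgp p_gt0.
exact: infodens_eq_Nlogb.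
Qed.

Lemma derive1_Egamma g : 1 < g ->
  derivable (Egamma P Q) g 1 /\ derive1 (Egamma P Q) g = - lr_tail Q p q g.
Proof.
move=> g_gt1; have g_gt0 : 0 < g := lt_trans ltr01 g_gt1.
exact (Egamma_derivative hp hq g_gt0 (Q_lr_eq_null g_gt1)).
Qed.

Lemma derive1_Egamma_rev g : 1 < g ->
  derivable (Egamma Q P) g 1 /\ derive1 (Egamma Q P) g = - lr_tail P q p g.
Proof.
move=> g_gt1; have g_gt0 : 0 < g := lt_trans ltr01 g_gt1.
exact (Egamma_derivative hq hp g_gt0 (P_lr_eq_null g_gt1)).
Qed.

Lemma continuous_derive1_Egamma g : 1 < g -> {for g, continuous (derive1 (Egamma P Q))}.
Proof.
move=> g_gt1; rewrite /prop_for /continuous_at (derive1_Egamma g_gt1).2.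
apply: cvg_trans (cvgN (lr_tail_continuous hp hq (Q_lr_eq_null g_gt1))).
apply: near_eq_cvg; near=> x.
have x_gt1 : 1 < x by near: x; exact: lt_nbhsr.
by rewrite (derive1_Egamma x_gt1).2.
Unshelve. all: by end_near.
Qed.

Lemma relcdf_logb_Egamma g : 1 < g ->
  relcdf P b p q (logb b g) = 1 - Egamma P Q g + g * derive1 (Egamma P Q) g.
Proof.
move=> g_gt1; rewrite relcdf_logb ?ltW // (derive1_Egamma g_gt1).2.
by rewrite (EgammaE hp hq) ?(le_trans ler01 (ltW g_gt1)) // mulrN; lra.
Qed.

Lemma relcdf_Nlogb_Egamma g : 1 < g ->
  relcdf P b p q (- logb b g) = - derive1 (Egamma Q P) g.
Proof. by move=> g_gt1; rewrite relcdf_Nlogb ?ltW // (derive1_Egamma_rev g_gt1).2 opprK. Qed.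

Lemma derive1_Egamma_cvg_at_right1 :
  derive1 (Egamma P Q) g @[g --> 1^'+] --> relcdf P b p q 0 - 1 + Egamma P Q 1.
Proof.
have -> : relcdf P b p q 0 - 1 + Egamma P Q 1 = - lr_tail Q p q 1.
  have := relcdf_logb (lexx 1); rewrite logb1 => ->.
  by rewrite (EgammaE hp hq) // mul1r; lra.
apply: cvg_trans (cvgN (lr_tail_cvg_at_right hp hq (g := 1))).
apply: near_eq_cvg; near=> x.
have x_gt1 : 1 < x by near: x; exact: nbhs_right_gt.
by rewrite (derive1_Egamma x_gt1).2.
Unshelve. all: by end_near.
Qed.

Lemma derive1_Egamma_rev_cvg_at_right1 :
  derive1 (Egamma Q P) g @[g --> 1^'+] --> - relcdf P b p q 0.
Proof.
have := relcdf_Nlogb (lexx 1); rewrite logb1 oppr0 => ->.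
apply: cvg_trans (cvgN (lr_tail_cvg_at_right hq hp (g := 1))).
apply: near_eq_cvg; near=> x.
have x_gt1 : 1 < x by near: x; exact: nbhs_right_gt.
by rewrite (derive1_Egamma_rev x_gt1).2.
Unshelve. all: by end_near.
Qed.

End information_spectrum.

Section determination.
Variables (R : realType) (b : R).
Hypothesis b_gt1 : 1 < b.

Let exp_gt1 (x : R) : 0 < x -> 1 < expR (x * ln b).
Proof. by move=> x_gt0; rewrite expR_gt1 mulr_gt0 // ln_gt0. Qed.

Lemma eq_ge0_from_Egamma (F F' E E' : R -> R) :
  (forall g, 1 < g -> F (logb b g) = 1 - E g + g * derive1 E g) ->
  (forall g, 1 < g -> F' (logb b g) = 1 - E' g + g * derive1 E' g) ->
  derive1 E g @[g --> 1^'+] --> F 0 - 1 + E 1 ->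
  derive1 E' g @[g --> 1^'+] --> F' 0 - 1 + E' 1 ->
  (forall g, 1 <= g -> E g = E' g) -> forall x, 0 <= x -> F x = F' x.
Proof.
move=> FE F'E' E_cvg E'_cvg EE' x; rewrite le_eqVlt => /orP [/eqP <-|x_gt0].
  have E_cvg' : derive1 E g @[g --> 1^'+] --> F' 0 - 1 + E' 1.
    apply: cvg_trans E'_cvg; apply: near_eq_cvg; near=> g.
    have g_gt1 : 1 < g by near: g; exact: nbhs_right_gt.
    by apply: eq_derive1_in g_gt1 _ => y /ltW /EE'.
  have : F 0 - 1 + E 1 = F' 0 - 1 + E' 1 by exact: norm_cvg_unique E_cvg E_cvg'.
  by rewrite EE' //; lra.
have g_gt1 := exp_gt1 x_gt0.
rewrite -(logb_expR b_gt1 x) FE // F'E' // EE' ?ltW //.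
by rewrite (eq_derive1_in g_gt1 (fun y y_gt1 => EE' y (ltW y_gt1))).
Unshelve. all: by end_near.
Qed.

Lemma eq_lt0_from_Egamma (F F' E E' : R -> R) :
  (forall g, 1 < g -> F (- logb b g) = - derive1 E g) ->
  (forall g, 1 < g -> F' (- logb b g) = - derive1 E' g) ->
  (forall g, 1 < g -> E g = E' g) -> forall x, x < 0 -> F x = F' x.
Proof.
move=> FE F'E' EE' x x_lt0; have /exp_gt1 g_gt1 : 0 < - x by rewrite oppr_gt0.
rewrite -[x]opprK -(logb_expR b_gt1 (- x)) FE // F'E' //.
by rewrite (eq_derive1_in g_gt1 EE').
Qed.

End determination.

Unset Implicit Arguments. Set Strict Implicit.

Theorem theorem3 (R : realType) (b : R) (hb : 1 < b)
  (d : measure_display) (T : measurableType d)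
  (mu : {measure set T -> \bar R}) (P Q : probability T R) (p q : T -> R)
  (hp : is_density mu P p) (hq : is_density mu Q q)
  (hatom : no_atoms P b p q) :
  (* (a) *)
  (forall g : R, 1 < g ->
     derivable (Egamma P Q) g 1 /\
     {for g, continuous (derive1 (Egamma P Q))} /\
     (derive1 (Egamma P Q)) g <= 0) /\
  (* (b) *)
  (forall g : R, 1 < g ->
     relcdf P b p q (logb b g) = 1 - Egamma P Q g + g * (derive1 (Egamma P Q)) g /\
     relcdf P b p q (- logb b g) = - (derive1 (Egamma Q P)) g) /\
  ((derive1 (Egamma P Q)) g @[g --> 1^'+] -->
      relcdf P b p q 0 - 1 + Egamma P Q 1) /\
  ((derive1 (Egamma Q P)) g @[g --> 1^'+] --> - relcdf P b p q 0) /\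
  (* (c) *)
  (forall (d' : measure_display) (T' : measurableType d')
     (mu' : {measure set T' -> \bar R}) (P' Q' : probability T' R)
     (p' q' : T' -> R),
     is_density mu' P' p' -> is_density mu' Q' q' -> no_atoms P' b p' q' ->
     ((forall g : R, 1 <= g -> Egamma P Q g = Egamma P' Q' g) ->
        forall x : R, 0 <= x -> relcdf P b p q x = relcdf P' b p' q' x) /\
     ((forall g : R, 1 < g -> Egamma Q P g = Egamma Q' P' g) ->
        forall x : R, x < 0 -> relcdf P b p q x = relcdf P' b p' q' x)).
Proof.
split; [|split; [|split; [|split]]].
- move=> g g_gt1; have [E_der E_eq] := derive1_Egamma hp hq hatom g_gt1.
  split; first exact: E_der.
  split; first exact (continuous_derive1_Egamma hp hq hatom g_gt1).
  by rewrite E_eq oppr_le0 fine_ge0 // measure_ge0.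
- move=> g g_gt1; split.
  + exact (relcdf_logb_Egamma hb hp hq hatom g_gt1).
  + exact (relcdf_Nlogb_Egamma hb hp hq hatom g_gt1).
- exact (derive1_Egamma_cvg_at_right1 hb hp hq hatom).
- exact (derive1_Egamma_rev_cvg_at_right1 hb hp hq hatom).
- move=> d' T' mu' P' Q' p' q' hp' hq' hatom'; split.
  + apply: (eq_ge0_from_Egamma hb).
    * exact (relcdf_logb_Egamma hb hp hq hatom).
    * exact (relcdf_logb_Egamma hb hp' hq' hatom').
    * exact (derive1_Egamma_cvg_at_right1 hb hp hq hatom).
    * exact (derive1_Egamma_cvg_at_right1 hb hp' hq' hatom').
  + apply: (eq_lt0_from_Egamma hb).
    * exact (relcdf_Nlogb_Egamma hb hp hq hatom).
    * exact (relcdf_Nlogb_Egamma hb hp' hq' hatom').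
Qed.
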